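(* Let $n\geq 3$. For all positive integers $i,j,r,s,t$, $$\frac{A_{i+j}}{A_s}\neq\frac{A_i}{A_t}+\frac{A_j}{A_r}.$$
   Context: The integers $A_i$ are defined by $A_0=0$, $A_1=1$, $A_{i+2}=nA_{i+1}-A_i$ for $i\geq0$. *)

From mathcomp Require Import all_boot all_order all_algebra.
Set Implicit Arguments. Unset Strict Implicit. Unset Printing Implicit Defensive.
Import Order.TTheory GRing.Theory Num.Theory.
Local Open Scope ring_scope.

Fixpoint A (n : int) (i : nat) : int :=
  match i with
  | 0%N => 0
  | 1%N => 1
  | (k.+1 as j).+1 => n * A n j - A n k
  end.

(* The sequence A_i (A_0 = 0, A_1 = 1, A_{i+2} = n A_{i+1} - A_i) is the Lucas
   sequence U(n, 1); we pair it with its companion V_k = 2 A_{k+1} - n A_k, so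
   that V_0 = 2, V_1 = n and V_k = A_{k+1} - A_{k-1}.

   Every identity below is, in one of its indices, an
      equality between two solutions of the recurrence, hence follows from its
      two initial values (lemma lucas_eq); the quadratic initial values reduce
      to Cassini's identity.  We get 2 A_{a+b} = V_a A_b + V_b A_a, the
      "difference" version, and (n^2 - 4) A_p A_q = V_{p+q} - V_{p-q}.
   2. Growth (n >= 3).  A and V more than double at each step; hence V is
      injective and even V_a + V_b determines {a, b}.
   3. Estimates.  V_j A_t = A_{t+j} +- A_{|t-j|}, so the sign of the "excess"
      V_j A_t - 2 A_s is the sign of t + j - s, and A_{i+r+1} >= n A_i A_r.
   4. Clearing denominators and using 2 A_{i+j} = V_i A_j + V_j A_i, the
      equation becomes A_i A_r (V_j A_t - 2 A_s) + A_j A_t (V_i A_r - 2 A_s) = 0.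
      Both excesses cannot have the same sign; in the mixed case either
      s = i + r, where the product formula turns the equation into
      V_{t+k} + V_i = V_{i+2r} + V_{t-k} (k = r - j), impossible by 2.; or
      i + r < s, where the growth estimates make the second term dominate. *)

From mathcomp Require Import all_boot all_order all_algebra zify ring.
Import Order.TTheory GRing.Theory Num.Theory.
Set Implicit Arguments. Unset Strict Implicit.
Local Open Scope ring_scope.

Section Identities.
Variable n : int.

Definition lucas (f : nat -> int) : Prop :=
  forall m, f m.+2 = n * f m.+1 - f m.

Lemma lucas_eq (f g : nat -> int) : lucas f -> lucas g ->
  f 0%N = g 0%N -> f 1%N = g 1%N -> forall m, f m = g m.
Proof.
move=> hf hg e0 e1 m; suff [] : f m = g m /\ f m.+1 = g m.+1 by [].
elim: m => [|m [IH1 IH2]]; first by [].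
by split; last rewrite hf hg IH1 IH2.
Qed.

Lemma A_rec m : A n m.+2 = n * A n m.+1 - A n m. Proof. by []. Qed.

Lemma A_small : (A n 0 = 0) * (A n 1 = 1) * (A n 2 = n).
Proof. by rewrite /= mulr1 subr0. Qed.

Definition V (k : nat) : int := 2 * A n k.+1 - n * A n k.

Lemma V_rec m : V m.+2 = n * V m.+1 - V m.
Proof. by rewrite /V !A_rec; ring. Qed.

Lemma cassini m : A n m.+1 ^+ 2 - n * A n m.+1 * A n m + A n m ^+ 2 = 1.
Proof.
elim: m => [|m IH]; first by rewrite !A_small; ring.
by rewrite -[RHS]IH A_rec; ring.
Qed.

Lemma VA_sum a b : V a * A n b + V b * A n a = 2 * A n (a + b).
Proof.
move: a; apply: (lucas_eq (f := fun a => V a * A n b + V b * A n a)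
                          (g := fun a => 2 * A n (a + b))).
- by move=> m; rewrite V_rec A_rec; ring.
- by move=> m; rewrite !addSn A_rec; ring.
- by rewrite /V !A_small; ring.
- by rewrite /V add1n !A_small; ring.
Qed.

Lemma VA_diff a c : V a * A n (a + c) - V (a + c) * A n a = 2 * A n c.
Proof.
move: c; apply: (lucas_eq (f := fun c => V a * A n (a + c) - V (a + c) * A n a)
                          (g := fun c => 2 * A n c)).
- by move=> m; rewrite !addnS V_rec A_rec; ring.
- by move=> m; rewrite A_rec; ring.
- by rewrite addn0 !A_small; ring.
- by have := cassini a; rewrite addn1 /V A_rec !A_small; lia.
Qed.

Lemma VV_sum x y : 2 * V (x + y) = V x * V y + (n ^+ 2 - 4) * A n x * A n y.
Proof.
move: x; apply: (lucas_eq (f := fun x => 2 * V (x + y))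
                 (g := fun x => V x * V y + (n ^+ 2 - 4) * A n x * A n y)).
- by move=> m; rewrite !addSn V_rec; ring.
- by move=> m; rewrite V_rec A_rec; ring.
- by rewrite /V !A_small; ring.
- by rewrite add1n /V A_rec !A_small; ring.
Qed.

Lemma VV_diff y c : V (y + c) * V y - (n ^+ 2 - 4) * A n (y + c) * A n y = 2 * V c.
Proof.
move: c; apply: (lucas_eq
  (f := fun c => V (y + c) * V y - (n ^+ 2 - 4) * A n (y + c) * A n y)
  (g := fun c => 2 * V c)).
- by move=> m; rewrite !addnS V_rec A_rec; ring.
- by move=> m; rewrite V_rec; ring.
- by have := cassini y; rewrite addn0 /V !A_small; lia.
- rewrite addn1 /V A_rec !A_small.
  transitivity (2 * n * (A n y.+1 ^+ 2 - n * A n y.+1 * A n y + A n y ^+ 2)).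
    by ring.
  by rewrite cassini; ring.
Qed.

Lemma prodA p q : (q <= p)%N -> (n ^+ 2 - 4) * A n p * A n q = V (p + q) - V (p - q).
Proof.
move=> hqp; have := VV_diff q (p - q); rewrite subnKC // => hdiff.
have := VV_sum p q; lia.
Qed.
End Identities.

Section Growth.
Variable n : int.
Hypothesis hn : 3 <= n.

Lemma lucas_grow (f : nat -> int) : lucas n f -> 0 <= f 0%N <= f 1%N ->
  forall m, f 0%N <= f m /\ 2 * f m <= f m.+1 + (2 * f 0%N - f 1%N).
Proof.
move=> hf /andP[f0_ge0 f01] m; elim: m => [|m [IH1 IH2]]; first lia.
have hm1 : f m <= f m.+1 by lia.
have : 0 <= (n - 3) * f m.+1 by apply: mulr_ge0; lia.
rewrite hf; lia.
Qed.

Lemma A_grow m : 0 <= A n m /\ 2 * A n m + 1 <= A n m.+1.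
Proof.
have := @lucas_grow (A n) (A_rec n) isT m; rewrite !A_small; lia.
Qed.

Lemma V_small : (V n 0 = 2) * (V n 1 = n).
Proof. by rewrite /V !A_small; split; ring. Qed.

Lemma V_grow m : 2 <= V n m /\ 2 * V n m <= V n m.+1 + 1.
Proof.
have hV01 : 0 <= V n 0 <= V n 1 by rewrite !V_small; lia.
have := @lucas_grow (V n) (@V_rec n) hV01 m; rewrite !V_small; lia.
Qed.

Lemma A_ge0 m : 0 <= A n m. Proof. by case: (A_grow m). Qed.

Lemma A_le : {homo A n : m p / (m <= p)%N >-> m <= p}.
Proof.
apply: homo_leq => [x|y x z|m]; [exact: lexx | exact: le_trans |].
by have [] := A_grow m; lia.
Qed.

Lemma A_lt m p : (m < p)%N -> 2 * A n m + 1 <= A n p.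
Proof. by move=> hmp; have [_ h] := A_grow m; have := A_le hmp; lia. Qed.

Lemma A_pos m : (0 < m)%N -> 0 < A n m.
Proof. by move=> /A_lt; rewrite A_small; lia. Qed.

Lemma V_lt : {homo V n : a b / (a < b)%N >-> a < b}.
Proof.
apply: homo_ltn => [y x z|m]; first exact: lt_trans.
by have [] := V_grow m; lia.
Qed.

Lemma V_le : {homo V n : a b / (a <= b)%N >-> a <= b}.
Proof.
apply: homo_leq => [x|y x z|m]; [exact: lexx | exact: le_trans |].
by have [] := V_grow m; lia.
Qed.

Lemma V_inj : injective (V n).
Proof. by move=> x y e; case: (ltngtP x y) => // /V_lt; rewrite e ltxx. Qed.

(* If c and d are below a, then V_c + V_d < V_a + V_b, since V_a is about
   twice V_{a-1}. *)
Lemma V_sum_lt a b c d : (c < a)%N -> (d < a)%N -> V n c + V n d < V n a + V n b.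
Proof.
case: a => [//|a]; rewrite !ltnS => /V_le hc /V_le hd.
by have [hb _] := V_grow b; have [_ ha] := V_grow a; lia.
Qed.

Lemma V_uniq a b c d : V n a + V n b = V n c + V n d ->
  (a = c /\ b = d) \/ (a = d /\ b = c).
Proof.
move=> e; wlog hba : a b e / (b <= a)%N.
  move=> W; case: (leqP b a) => hab; first exact: W.
  by rewrite addrC in e; case: (W b a e (ltnW hab)) => -[-> ->]; [right | left].
wlog hdc : c d e / (d <= c)%N.
  move=> W; case: (leqP d c) => hcd; first exact: W.
  by rewrite [RHS]addrC in e; case: (W d c e (ltnW hcd)) => -[-> ->]; [right | left].
have ac : a = c.
  case: (ltngtP a c) => // hac.
    by have := V_sum_lt d hac (leq_ltn_trans hba hac); lia.
  by have := V_sum_lt b hac (leq_ltn_trans hdc hac); lia.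
by left; split => //; apply: V_inj; rewrite ac in e; lia.
Qed.
End Growth.

Section Estimates.
Variable n : int.
Hypothesis hn : 3 <= n.

(* From V_k = n A_k - 2 A_{k-1} and 2 A_{k-1} < A_k. *)
Lemma V_bounds k : (0 < k)%N -> (n - 1) * A n k <= V n k /\ V n k <= n * A n k.
Proof. by case: k => [//|k] _; have [] := A_grow hn k; rewrite /V A_rec; lia. Qed.

(* Super-multiplicativity of A, from the addition formula for A_{(i+1)+r}. *)
Lemma prod_lower i r : (0 < r)%N -> n * A n i * A n r <= A n (i + r).+1.
Proof.
move=> hr; have sum := VA_sum n i.+1 r; rewrite addSn in sum.
have [Vi _] := V_bounds (ltn0Sn i); have [Vr _] := V_bounds hr.
have [Ai Ai1] := A_grow hn i; have Ar := A_ge0 hn r.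
have h1 : (n - 1) * A n i.+1 * A n r <= V n i.+1 * A n r by apply: ler_wpM2r.
have h2 : (n - 1) * A n r * A n i.+1 <= V n r * A n i.+1 by apply: ler_wpM2r; lia.
have h3 : n * A n i <= (n - 1) * A n i.+1 by nia.
have h4 : n * A n i * A n r <= (n - 1) * A n i.+1 * A n r by apply: ler_wpM2r.
lia.
Qed.

(* |V_j A_t - V_t A_j| = 2 A_{|t-j|} <= 2 A_{t+j-2}. *)
Lemma cross_bound j t m : (0 < j)%N -> (0 < t)%N -> (t + j = m.+2)%N ->
  - (2 * A n m) <= V n j * A n t - V n t * A n j /\ V n j * A n t - V n t * A n j <= 2 * A n m.
Proof.
move=> hj ht e; wlog hjt : j t hj ht e / (j <= t)%N.
  move=> W; case: (leqP j t) => h; first exact: W.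
  by rewrite addnC in e; have [] := W t j ht hj e (ltnW h); lia.
have := VA_diff n j (t - j); rewrite subnKC // => diff.
have : A n (t - j) <= A n m by apply: A_le; lia.
by have := A_ge0 hn (t - j); lia.
Qed.

Lemma VA_near j t m : (0 < j)%N -> (0 < t)%N -> (t + j = m.+2)%N ->
  A n m.+2 - A n m <= V n j * A n t /\ V n j * A n t <= A n m.+2 + A n m.
Proof.
move=> hj ht e; have [lo hi] := cross_bound hj ht e.
by have := VA_sum n j t; rewrite addnC e; lia.
Qed.

(* How much V_j A_t exceeds 2 A_s; after clearing denominators the equation of
   the theorem says that a positive combination of two excesses vanishes. *)
Definition excess (j t s : nat) : int := V n j * A n t - 2 * A n s.

Lemma excess_pos j t s : (0 < j)%N -> (0 < t)%N -> (s < t + j)%N -> 0 < excess j t s.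
Proof.
move=> hj ht hs; have [m e] : exists m, (t + j = m.+2)%N by exists (t + j).-2; lia.
have [lo _] := VA_near hj ht e; rewrite A_rec in lo.
have : A n s <= A n m.+1 by apply: A_le; lia.
have [Am Am1] := A_grow hn m.
have : 0 <= (n - 3) * A n m.+1 by apply: mulr_ge0; lia.
by rewrite /excess; lia.
Qed.

Lemma excess_neg j t s : (0 < j)%N -> (0 < t)%N -> (t + j <= s)%N -> excess j t s < 0.
Proof.
move=> hj ht hs; have [m e] : exists m, (t + j = m.+2)%N by exists (t + j).-2; lia.
have [_ hi] := VA_near hj ht e.
have : A n m.+2 <= A n s by apply: A_le; lia.
have := A_lt hn (ltnSn m.+1); have := A_lt hn (ltnSn m).
by have := A_ge0 hn m; rewrite /excess; lia.
Qed.
End Estimates.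

Section NoBalance.
Variable n : int.
Hypothesis hn : 3 <= n.

(* Mixed signs with s = i + r: dividing by A_i, the equation becomes
   A_t A_{r-j} = A_{i+r} A_r, which the product formula turns into a relation
   V_{t+k} + V_i = V_{i+2r} + V_{t-k} with 0 < k = r - j < r, impossible. *)
Lemma balance_exact i j r t : (0 < i)%N -> (0 < j)%N -> (0 < r)%N -> (i + r < t + j)%N ->
  A n i * A n r * excess n j t (i + r) + A n j * A n t * excess n i r (i + r) <> 0.
Proof.
move=> hi hj hr hlt E.
have Ai := A_pos hn hi; have Ar := A_pos hn hr; have Air := A_pos hn (ltn_addr r hi).
have sum := VA_sum n i r.
have cross_eq : A n t * (V n j * A n r - V n r * A n j) = 2 * A n r * A n (i + r).
  have : A n i * (A n t * (V n j * A n r - V n r * A n j)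
                  - A n r * (V n i * A n r + V n r * A n i)) = 0.
    by rewrite -E /excess -sum; ring.
  by move=> /eqP; rewrite mulf_eq0 (gt_eqF Ai) /= subr_eq0 sum => /eqP ->; ring.
have Ar_Air : 0 < A n r * A n (i + r) by apply: mulr_gt0.
case: (ltnP r j) => hrj.
  have := VA_diff n r (j - r); rewrite subnKC ?(ltnW hrj) // => diff.
  have : 0 <= A n t * A n (j - r) by apply: mulr_ge0; apply: A_ge0.
  have neg : V n j * A n r - V n r * A n j = - (2 * A n (j - r)) by lia.
  by rewrite neg in cross_eq; lia.
have := VA_diff n j (r - j); rewrite subnKC // => diff; rewrite diff in cross_eq.
have hk : (0 < r - j)%N.
  rewrite subn_gt0 ltn_neqAle hrj andbT; apply/eqP => ejr.
  by move: cross_eq; rewrite ejr subnn A_small; lia.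
have AA_eq : A n t * A n (r - j) = A n (i + r) * A n r by lia.
have eV : V n (t + (r - j)) + V n i = V n (i + r + r) + V n (t - (r - j)).
  have hkt : (r - j <= t)%N by lia.
  have p1 := prodA n hkt; have p2 := prodA n (leq_addl i r); rewrite addnK in p2.
  have : V n (t + (r - j)) - V n (t - (r - j)) = V n (i + r + r) - V n i.
    by rewrite -p1 -p2 -!mulrA AA_eq.
  lia.
by case: (V_uniq hn eV) => -[]; lia.
Qed.

(* Mixed signs with i + r < s < t + j: the positive term is less than
   n A_i A_r A_j A_t, while the negative one exceeds it in absolute value. *)
Lemma balance_gap i j r s t : (0 < i)%N -> (0 < j)%N -> (0 < r)%N -> (0 < t)%N ->
  (i + r < s)%N -> (s < t + j)%N ->
  A n i * A n r * excess n j t s + A n j * A n t * excess n i r s <> 0.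
Proof.
move=> hi hj hr ht his hst E.
have X_gt0 : 0 < A n i * A n r by apply: mulr_gt0; apply: A_pos.
have Y_gt0 : 0 < A n j * A n t by apply: mulr_gt0; apply: A_pos.
have As := A_pos hn (leq_ltn_trans (leq0n _) his).
have VjAt : V n j * A n t <= n * (A n j * A n t).
  by rewrite mulrA; apply: ler_wpM2r; [apply: A_ge0 | case: (V_bounds hn hj)].
have ViAr : excess n i r (i + r) < 0 by apply: excess_neg; rewrite // addnC.
have Ais := A_lt hn his.
have XAs : n * (A n i * A n r) <= A n s.
  by rewrite mulrA; apply: le_trans (prod_lower hn i hr) (A_le hn his).
have lhs : A n i * A n r * excess n j t s < A n i * A n r * (n * (A n j * A n t)).
  by rewrite ltr_pM2l // /excess; lia.
have rhs : A n j * A n t * (n * (A n i * A n r)) <= A n j * A n t * - excess n i r s.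
  by rewrite ler_pM2l // /excess; rewrite /excess in ViAr; lia.
lia.
Qed.

Lemma no_balance i j r s t : (0 < i)%N -> (0 < j)%N -> (0 < r)%N -> (0 < t)%N ->
  A n i * A n r * excess n j t s + A n j * A n t * excess n i r s <> 0.
Proof.
move=> hi hj hr ht.
have X_gt0 : 0 < A n i * A n r by apply: mulr_gt0; apply: A_pos.
have Y_gt0 : 0 < A n j * A n t by apply: mulr_gt0; apply: A_pos.
case: (ltnP s (t + j)) => hst; case: (ltnP s (r + i)) => hsi.
- have := excess_pos hn hj ht hst; have := excess_pos hn hi hr hsi; nia.
- move: hsi; rewrite addnC leq_eqVlt => /orP[/eqP esi|his].
    by subst s; apply: balance_exact.
  exact: balance_gap.
- move: hst; rewrite addnC leq_eqVlt => /orP[/eqP ejs|hjs]; rewrite addrC.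
    by subst s; apply: balance_exact; rewrite // addnC.
  by apply: balance_gap; rewrite // addnC.
- have := excess_neg hn hj ht hst; have := excess_neg hn hi hr hsi; nia.
Qed.
End NoBalance.

Theorem lemma4p5 (n : int) (hn : 3 <= n) (i j r s t : nat)
  (hi : (0 < i)%N) (hj : (0 < j)%N) (hr : (0 < r)%N) (hs : (0 < s)%N) (ht : (0 < t)%N) :
  (A n (i + j))%:~R / (A n s)%:~R
    <> (A n i)%:~R / (A n t)%:~R + (A n j)%:~R / (A n r)%:~R :> rat.
Proof.
move=> E.
have nz m : (0 < m)%N -> (A n m)%:~R != 0 :> rat.
  by move=> /(A_pos hn); rewrite intr_eq0 => /gt_eqF ->.
have cleared : A n (i + j) * A n t * A n r = A n s * (A n i * A n r + A n j * A n t).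
  apply: (@intr_inj rat); rewrite !rmorphM rmorphD !rmorphM /=.
  have -> : (A n (i + j))%:~R = (A n s)%:~R * ((A n i)%:~R / (A n t)%:~R
                                   + (A n j)%:~R / (A n r)%:~R) :> rat.
    by rewrite -E mulrC divfK ?nz.
  by field; rewrite !nz.
apply: (no_balance hn hi hj hr ht (s := s)).
transitivity (A n t * A n r * (V n i * A n j + V n j * A n i)
              - 2 * (A n s * (A n i * A n r + A n j * A n t))).
  by rewrite /excess; ring.
by rewrite VA_sum -cleared; ring.
Qed.
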